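(* Let $\Gamma=(V,E)$ be a finite graph and let $\phi\in\Phi(\Gamma)$. If $\nvdash_\Gamma\phi$, then there exists a game $G=(V,\{S_v\}_{v\in V},\{u_v\}_{v\in V})$ over the graph $\Gamma$ such that $G\nvDash\phi$.
   Context: Graphs are finite, undirected, with no loops or multiple edges. For $v\in V$, $Adj(v)$ is the set of vertices adjacent to $v$ and $Adj^+(v)=Adj(v)\cup\{v\}$. For $U\subseteq V$ the border is ${\cal B}(U)=\{v\in U\mid (v,w)\in E\text{ for some }w\in V\setminus U\}$. A cut $(U,W)$ of $\Gamma$ is a partition $V=U\sqcup W$. Formulas: $\Phi(\Gamma)$ is the smallest set containing $\bot$, all expressions $A\rhd B$ with $A,B\subseteq V$, and $\phi\rightarrow\psi$ for $\phi,\psi\in\Phi(\Gamma)$ (other connectives, e.g. $\neg$, are the usual abbreviations). $A,B$ denotes $A\cup B$, and a single vertex $v$ stands for $\{v\}$. Proof system: $\vdash_\Gamma\phi$ means $\phi$ is derivable from propositional tautologies of $\Phi(\Gamma)$ and the axioms (1) Reflexivity: $A\rhd B$ whenever $B\subseteq A$; (2) Augmentation: $A\rhd B\rightarrow A,C\rhd B,C$; (3) Transitivity: $A\rhd B\rightarrow(B\rhd C\rightarrow A\rhd C)$; (4) Contiguity: $A,B\rhd C\rightarrow {\cal B}(U),{\cal B}(W),B\rhd C$ for every cut $(U,W)$ of $\Gamma$ with $A\subseteq U$ and $C\subseteq W$; using the rule Modus Ponens. Semantics: a game over $\Gamma$ is a strategic game $G=(V,\{S_v\}_{v\in V},\{u_v\}_{v\in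 V})$ whose set of players is $V$, each strategy set $S_v$ is a finite set, and each pay-off function $u_v$ (real-valued on strategy profiles) depends only on the strategies of the players in $Adj^+(v)$. $NE(G)$ is the set of (pure) Nash equilibria of $G$. For profiles $\mathbf s=\langle s_v\rangle_{v\in V}$, $\mathbf t=\langle t_v\rangle_{v\in V}$ and $X\subseteq V$, $\mathbf s=_X\mathbf t$ means $s_x=t_x$ for all $x\in X$. Truth: $G\nvDash\bot$; $G\vDash A\rhd B$ iff for all $\mathbf s,\mathbf t\in NE(G)$, $\mathbf s=_A\mathbf t$ implies $\mathbf s=_B\mathbf t$; $G\vDash\psi_1\rightarrow\psi_2$ iff $G\nvDash\psi_1$ or $G\vDash\psi_2$. *)

From mathcomp Require Import all_boot.
From Stdlib Require Import Reals.
Set Implicit Arguments. Unset Strict Implicit. Unset Printing Implicit Defensive.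

Section Defs.
Variable T : finType.

(* Formulas Phi(Gamma): bot, A |> B, and implication. *)
Inductive form : Type :=
| FBot : form
| FRhd : {set T} -> {set T} -> form
| FImp : form -> form -> form.

Fixpoint feval (val : {set T} -> {set T} -> bool) (f : form) : bool :=
  match f with
  | FBot => false
  | FRhd A B => val A B
  | FImp p q => feval val p ==> feval val q
  end.

Definition tautology (f : form) : Prop := forall val, feval val f.

Definition border (e : rel T) (U : {set T}) : {set T} :=
  [set v in U | [exists w, (w \notin U) && e v w]].

(* Derivability |-_Gamma. A cut (U,W) is given by U, with W = ~: U. *)
Inductive gderivable (e : rel T) : form -> Prop :=
| d_taut f : tautology f -> gderivable e f
| d_refl (A B : {set T}) : B \subset A -> gderivable e (FRhd A B)
| d_aug (A B C : {set T}) : gderivable e (FImp (FRhd A B) (FRhd (A :|: C) (B :|: C)))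
| d_trans (A B C : {set T}) :
    gderivable e (FImp (FRhd A B) (FImp (FRhd B C) (FRhd A C)))
| d_contig (U A B C : {set T}) :
    A \subset U -> C \subset ~: U ->
    gderivable e (FImp (FRhd (A :|: B) C)
                      (FRhd (border e U :|: border e (~: U) :|: B) C))
| d_mp f g : gderivable e (FImp f g) -> gderivable e f -> gderivable e g.

Record game : Type := Game {
  gstrat : T -> finType;
  gpayoff : forall v : T, (forall w : T, gstrat w) -> R
}.

Definition game_over (e : rel T) (G : game) : Prop :=
  forall (v : T) (s t : forall w, gstrat G w),
    (forall w, (w == v) || e v w -> s w = t w) ->
    @gpayoff G v s = @gpayoff G v t.

Definition is_NE (G : game) (s : forall w, gstrat G w) : Prop :=
  forall (v : T) (s' : forall w, gstrat G w),
    (forall w, w != v -> s' w = s w) ->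
    (@gpayoff G v s' <= @gpayoff G v s)%R.

Definition eq_on (G : game) (X : {set T}) (s t : forall w, gstrat G w) : Prop :=
  forall x, x \in X -> s x = t x.

Fixpoint sat (G : game) (f : form) : Prop :=
  match f with
  | FBot => False
  | FRhd A B => forall s t : (forall w, gstrat G w), is_NE s -> is_NE t -> eq_on A s t -> eq_on B s t
  | FImp p q => sat G p -> sat G q
  end.

End Defs.

(* As T is finite, the axiom schemes have finitely many instances, so a formula
   that is not derivable is falsified by a valuation of the atoms A |> B that
   validates every instance.  Such a valuation is realised by a game.  For a
   pair (D, E) whose atom is false, the vertices v with D |> v contain D but miss
   some b in E; let Y be the vertices outside that set reachable from b along
   edges not lying inside it.  A local gadget game on Y has as equilibria exactly
   the two uniform colourings of Y, so they agree on D and differ at b.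
   Contiguity for the cut around the reachable set shows that ~: Y |> y fails for
   every y in Y, so the gadget never separates a validated pair.  The required
   game is the product of the gadgets over all pairs. *)

From HB Require Import structures.
From Stdlib Require Import Reals Lra Classical.
From mathcomp Require Import all_boot.
Set Implicit Arguments. Unset Strict Implicit. Unset Printing Implicit Defensive.

Record gmodel (T : finType) (e : rel T) (val : {set T} -> {set T} -> bool) : Prop :=
  GModel {
    val_refl : forall {A B : {set T}}, B \subset A -> val A B;
    val_aug : forall {A B : {set T}} (C : {set T}), val A B -> val (A :|: C) (B :|: C);
    val_trans : forall {A B C : {set T}}, val A B -> val B C -> val A C;
    val_contig : forall {U A B C : {set T}}, A \subset U -> C \subset ~: U ->
      val (A :|: B) C -> val (border e U :|: border e (~: U) :|: B) C }.

Section Derivations.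
Variables (T : finType) (e : rel T).

(* Side conditions are enforced by intersecting, so every instance is an
   axiom, and it is the original axiom whenever the side conditions hold. *)
Definition refl_instance (x : {set T} * {set T}) : form T :=
  let: (A, B) := x in FRhd A (A :&: B).

Definition aug_instance (x : {set T} * {set T} * {set T}) : form T :=
  let: (A, B, C) := x in FImp (FRhd A B) (FRhd (A :|: C) (B :|: C)).

Definition trans_instance (x : {set T} * {set T} * {set T}) : form T :=
  let: (A, B, C) := x in FImp (FRhd A B) (FImp (FRhd B C) (FRhd A C)).

Definition contig_instance (x : {set T} * {set T} * {set T} * {set T}) : form T :=
  let: (U, A, B, C) := x in
  FImp (FRhd (U :&: A :|: B) (C :\: U))
       (FRhd (border e U :|: border e (~: U) :|: B) (C :\: U)).

Definition axiom_instances : seq (form T) :=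
  map refl_instance (enum {: {set T} * {set T}}) ++
  map aug_instance (enum {: {set T} * {set T} * {set T}}) ++
  map trans_instance (enum {: {set T} * {set T} * {set T}}) ++
  map contig_instance (enum {: {set T} * {set T} * {set T} * {set T}}).

Lemma feval_foldr val (L : seq (form T)) phi :
  feval val (foldr (@FImp T) phi L) = all (feval val) L ==> feval val phi.
Proof. by elim: L => //= f L ->; case: (feval val f). Qed.

Lemma derivable_foldr_map (I : Type) (g : I -> form T) (s : seq I) phi :
  (forall x, gderivable e (g x)) ->
  gderivable e (foldr (@FImp T) phi (map g s)) -> gderivable e phi.
Proof. by move=> dg; elim: s => //= x s IH d; apply: IH; apply: d_mp d (dg x). Qed.

Lemma derivable_refl_instance x : gderivable e (refl_instance x).
Proof. by case: x => A B; apply/d_refl/subsetIl. Qed.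

Lemma derivable_aug_instance x : gderivable e (aug_instance x).
Proof. by case: x => [[A B] C]; apply: d_aug. Qed.

Lemma derivable_trans_instance x : gderivable e (trans_instance x).
Proof. by case: x => [[A B] C]; apply: d_trans. Qed.

Lemma derivable_contig_instance x : gderivable e (contig_instance x).
Proof. by case: x => [[[U A] B] C]; apply: d_contig; [apply: subsetIl | apply: subsetDr]. Qed.

Lemma derivable_from_axiom_instances phi :
  gderivable e (foldr (@FImp T) phi axiom_instances) -> gderivable e phi.
Proof.
rewrite !foldr_cat.
move/(derivable_foldr_map derivable_refl_instance).
move/(derivable_foldr_map derivable_aug_instance).
move/(derivable_foldr_map derivable_trans_instance).
exact/(derivable_foldr_map derivable_contig_instance).
Qed.

Lemma gmodel_axiom_instances val :
  all (feval val) axiom_instances -> gmodel e val.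
Proof.
rewrite !all_cat !all_map => /and4P[/allP refl /allP aug /allP trans /allP contig].
split=> [A B sBA | A B C | A B C AB BC | U A B C sAU sCU].
- by have := refl (A, B); rewrite -enumT mem_enum /= (setIidPr sBA) => /(_ isT).
- by have := aug (A, B, C); rewrite -enumT mem_enum /= => /(_ isT)/implyP.
- by have := trans (A, B, C); rewrite -enumT mem_enum /= AB BC => /(_ isT).
have := contig (U, A, B, C); rewrite -enumT mem_enum /= (setIidPr sAU).
have -> : C :\: U = C by apply/setDidPl; rewrite disjoints_subset.
by move=> /(_ isT)/implyP.
Qed.

Lemma not_derivable_countermodel phi :
  ~ gderivable e phi -> exists2 val, gmodel e val & ~~ feval val phi.
Proof.
move=> not_phi.
have /not_all_ex_not[val /negP] : ~ tautology (foldr (@FImp T) phi axiom_instances).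
  by move=> taut; apply/not_phi/derivable_from_axiom_instances/d_taut.
by rewrite feval_foldr negb_imply => /andP[/gmodel_axiom_instances]; exists val.
Qed.

End Derivations.

Section ConstraintGame.
Variables (T S : finType) (ok : T -> (T -> S) -> bool).

Definition update (s : T -> S) v x : T -> S := fun w => if w == v then x else s w.

Definition constraint_game : game T :=
  @Game T (fun=> S) (fun v s => if ok v s then R1 else R0).

Lemma constraint_game_over (e : rel T) :
  (forall v s t, (forall w, (w == v) || e v w -> s w = t w) -> ok v s = ok v t) ->
  game_over e constraint_game.
Proof. by move=> ok_local v s t /ok_local /= ->. Qed.

Lemma constraint_game_NE :
  (forall v s, exists x, ok v (update s v x)) ->
  forall s, is_NE (G := constraint_game) s <-> (forall v, ok v s).
Proof.
move=> fixable s; split=> [NEs v | ok_s v s' _]; last first.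
  by rewrite /= ok_s; case: ifP => _; lra.
apply: contraT => not_ok; have [x ok_x] := fixable v s.
have others w : w != v -> update s v x w = s w by rewrite /update => /negbTE->.
have := NEs v _ others; rewrite /= ok_x (negbTE not_ok) => ?; exfalso; lra.
Qed.

End ConstraintGame.

Section Neighbourhoods.
Variables (T : finType) (e : rel T).
Hypothesis e_sym : forall x y, e x y = e y x.
Implicit Types (X Y : {set T}) (b v w x y : T).

Definition ynbr Y v w := (w \in Y) && ((w == v) || e v w).

(* Connectedness of Y through the sets Y :&: Adj^+(v), where v may lie outside Y. *)
Definition linked Y := forall f : T -> bool,
  (forall v w1 w2, ynbr Y v w1 -> ynbr Y v w2 -> f w1 = f w2) ->
  {in Y &, forall y1 y2, f y1 = f y2}.

Definition edge_out X := [rel x y | e x y && ~~ ((x \in X) && (y \in X))].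
Definition reach X b := [set y | connect (edge_out X) b y].
Definition region X b := reach X b :\: X.

Lemma reach_step X b x y :
  x \in reach X b -> edge_out X x y -> y \in reach X b.
Proof. by rewrite !inE => bx xy; apply: connect_trans bx (@connect1 _ (edge_out X) _ _ xy). Qed.

Lemma connect_propagate (r : rel T) (P : T -> Prop) b :
  P b -> (forall x y, connect r b x -> r x y -> P x -> P y) ->
  forall y, connect r b y -> P y.
Proof.
move=> Pb step y /connectP[p]; elim/last_ind: p y => [_ _ -> // | p z IH y].
rewrite rcons_path last_rcons => /andP[p_path r_z] ->.
have b_last : connect r b (last b p) by apply/connectP; exists p.
exact: step b_last r_z (IH _ p_path erefl).
Qed.

Lemma linked_region X b : b \notin X -> linked (region X b).
Proof.
move=> bX f f_loc; set Y := region X b.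
have bY : b \in Y by rewrite in_setD bX inE connect0.
pose P x := forall w, ynbr Y x w -> f w = f b.
suff reach_P : forall z, z \in reach X b -> P z.
  have fY y : y \in Y -> f y = f b.
    by move=> yY; apply: reach_P; [apply: subsetP (subsetDl _ _) y yY | rewrite /ynbr yY eqxx].
  by move=> y1 y2 /fY-> /fY->.
move=> z; rewrite inE; apply: connect_propagate => [w /f_loc | x y bx /andP[exy not_XX] Px w yw].
  by apply; rewrite /ynbr bY eqxx.
case xY: (x \in Y).
  rewrite (f_loc y w x yw); last by rewrite /ynbr xY e_sym exy orbT.
  by apply: Px; rewrite /ynbr xY eqxx.
have xX : x \in X by move: xY; rewrite in_setD inE bx andbT => /negbFE.
have yX : y \notin X by move: not_XX; rewrite xX.
have yY : y \in Y by rewrite in_setD yX (reach_step (_ : x \in _)) ?inE //= exy xX.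
rewrite (f_loc y w y yw); last by rewrite /ynbr yY eqxx.
by apply: Px; rewrite /ynbr yY exy orbT.
Qed.

(* An edge leaving a connected component of [edge_out X] has both ends in X. *)
Lemma border_reach X b : border e (reach X b) :|: border e (~: reach X b) \subset X.
Proof.
apply/subsetP=> v; rewrite in_setU => /orP[]; rewrite in_set;
  move=> /andP[vW /existsP[w /andP[wW evw]]]; apply/negPn/negP => vX.
- by rewrite (reach_step vW) //= evw (negbTE vX) in wW.
- rewrite in_setC negbK in wW.
  by rewrite in_setC (reach_step wW) //= e_sym evw (negbTE vX) andbF in vW.
Qed.

End Neighbourhoods.

Record cell := Cell { colour : bool; poisoned : bool; alarm : bool }.

Definition cell_triple (c : cell) := (colour c, poisoned c, alarm c).
Definition triple_cell (t : bool * bool * bool) := let: (c, p, a) := t in Cell c p a.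
Lemma cell_tripleK : cancel cell_triple triple_cell. Proof. by case. Qed.
HB.instance Definition _ := Finite.copy cell (can_type cell_tripleK).

Section Cells.
Variables (T : finType) (e : rel T) (Y : {set T}).
Hypotheses (e_sym : forall x y, e x y = e y x) (e_irr : forall x, e x x = false).
Implicit Types (n m : T -> cell) (v w : T).

(* A player in Y raises the alarm when two unpoisoned cells of its closed
   Y-neighbourhood have different colours, and the Y-neighbours of an alarmed
   player are poisoned.  An alarm thus poisons every cell that could justify
   it, so equilibria have no alarm and their colours are locally constant. *)
Definition alarm_near v n := [exists w, e v w && alarm (n w)].

Definition discord v n := [exists w1, exists w2,
  [&& ynbr e Y v w1, ynbr e Y v w2, ~~ poisoned (n w1), ~~ poisoned (n w2)
    & colour (n w1) != colour (n w2)]].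

Definition cell_ok v n :=
  [&& (v \in Y) || ~~ colour (n v),
      poisoned (n v) == (v \in Y) && alarm_near v n
    & alarm (n v) == discord v n].

Lemma cell_ok_local v n m :
  (forall w, (w == v) || e v w -> n w = m w) -> cell_ok v n = cell_ok v m.
Proof.
move=> nm; have nmv : n v = m v by apply: nm; rewrite eqxx.
rewrite /cell_ok nmv.
have -> : alarm_near v n = alarm_near v m.
  by apply: eq_existsb => w; case evw: (e v w); rewrite //= nm // evw orbT.
have -> : discord v n = discord v m.
  apply: eq_existsb => w1; apply: eq_existsb => w2.
  case n1: (ynbr e Y v w1); case n2: (ynbr e Y v w2) => //=.
  by move: n1 n2 => /andP[_ /nm->] /andP[_ /nm->].
by [].
Qed.

Lemma cell_ok_fixable v n : exists x, cell_ok v (update n v x).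
Proof.
pose p := (v \in Y) && alarm_near v n.
pose a := discord v (update n v (Cell false p false)).
exists (Cell false p a).
have near_upd : alarm_near v (update n v (Cell false p a)) = alarm_near v n.
  by apply: eq_existsb => w; rewrite /update; case: eqP => // ->; rewrite e_irr.
have discord_upd : discord v (update n v (Cell false p a)) = a.
  by apply: eq_existsb => w1; apply: eq_existsb => w2; rewrite /update;
    case: eqP => _; case: eqP.
by rewrite /cell_ok near_upd discord_upd /update eqxx /= orbT !eqxx.
Qed.

Definition flag (c : bool) v : cell := Cell ((v \in Y) && c) false false.

Lemma flag_ok c v : cell_ok v (flag c).
Proof.
rewrite /cell_ok.
have -> : alarm_near v (flag c) = false by apply/existsP => -[w]; rewrite andbF.
have -> : discord v (flag c) = false.
  apply/existsP => -[w1 /existsP[w2 /and5P[/andP[w1Y _] /andP[w2Y _] _ _]]].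
  by rewrite /flag /= w1Y w2Y eqxx.
by rewrite /flag /=; case: (v \in Y).
Qed.

Section OkProfile.
Variable n : T -> cell.
Hypothesis n_ok : forall v, cell_ok v n.

Lemma ok_no_alarm v : alarm (n v) = false.
Proof.
apply/negP => alarm_v.
have poisoned_nbr w : ynbr e Y v w -> w != v -> poisoned (n w).
  move=> /andP[wY /orP[/eqP-> | evw]]; first by rewrite eqxx.
  have /and3P[_ /eqP-> _] := n_ok w.
  by move=> _; rewrite wY; apply/existsP; exists v; rewrite e_sym evw alarm_v.
have /and3P[_ _ /eqP] := n_ok v.
rewrite alarm_v /discord => /esym/existsP[w1 /existsP[w2 /and5P[n1 n2 p1 p2]]].
have -> : w1 = v by apply/eqP; apply: contraNT p1; apply: poisoned_nbr.
have -> : w2 = v by apply/eqP; apply: contraNT p2; apply: poisoned_nbr.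
by rewrite eqxx.
Qed.

Lemma ok_unpoisoned v : poisoned (n v) = false.
Proof.
have /and3P[_ /eqP-> _] := n_ok v.
by apply/negbTE/nandP; right; apply/existsP => -[w]; rewrite ok_no_alarm andbF.
Qed.

Lemma ok_colour_local v w1 w2 :
  ynbr e Y v w1 -> ynbr e Y v w2 -> colour (n w1) = colour (n w2).
Proof.
move=> n1 n2; have /and3P[_ _ /eqP] := n_ok v.
rewrite ok_no_alarm => /esym/negbT no_discord.
apply/eqP; apply: contraT => c12; case/negP: no_discord.
by apply/existsP; exists w1; apply/existsP; exists w2; rewrite n1 n2 !ok_unpoisoned c12.
Qed.

Lemma ok_colour_out v : v \notin Y -> colour (n v) = false.
Proof. by move=> /negbTE vY; have /and3P[] := n_ok v; rewrite vY => /negbTE. Qed.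

Lemma ok_flag : linked e Y -> exists c, n =1 flag c.
Proof.
move=> Y_linked.
have n_shape v : n v = Cell (colour (n v)) false false.
  by move: (ok_no_alarm v) (ok_unpoisoned v); case: (n v) => /= c p a -> ->.
case: (pickP (mem Y)) => [y yY | Y0].
  exists (colour (n y)) => v; rewrite /flag n_shape.
  case vY: (v \in Y); first by rewrite (Y_linked _ ok_colour_local v y vY yY).
  by rewrite ok_colour_out ?vY.
by exists false => v; rewrite /flag n_shape andbF ok_colour_out // [_ \in _]Y0.
Qed.

End OkProfile.
End Cells.

Section Separators.
Variables (T : finType) (e : rel T) (val : {set T} -> {set T} -> bool).
Hypothesis e_sym : forall x y, e x y = e y x.
Hypothesis Hval : gmodel e val.
Implicit Types (D E : {set T}) (b x : T).

Lemma val_setU D E1 E2 : val D E1 -> val D E2 -> val D (E1 :|: E2).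
Proof.
move=> DE1 DE2.
have DE1D : val D (E1 :|: D) by have := val_aug Hval D DE1; rewrite setUid.
have E1D_E2E1D : val (E1 :|: D) (E2 :|: (E1 :|: D)).
  by have := val_aug Hval (E1 :|: D) DE2; rewrite [D :|: _]setUCA setUid.
apply: (val_trans Hval (val_trans Hval DE1D E1D_E2E1D)); apply: (val_refl Hval).
by rewrite setUA [E2 :|: E1]setUC subsetUl.
Qed.

Definition determined D := [set x | val D [set x]].

Lemma val_determined D : val D (determined D).
Proof.
rewrite -[determined D]set_enum.
have : {subset enum (determined D) <= determined D} by move=> x; rewrite mem_enum.
elim: (enum _) => [_ | x s IH xs_cl].
  by apply: (val_refl Hval); apply/subsetP => x; rewrite inE.
rewrite (_ : [set y in x :: s] = [set x] :|: [set y in s]); last first.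
  by apply/setP => y; rewrite !inE.
apply: val_setU; first by have := xs_cl x (mem_head x s); rewrite inE.
by apply: IH => y ys; apply: xs_cl; rewrite inE ys orbT.
Qed.

Lemma val_determinedE D E : val D E = (E \subset determined D).
Proof.
apply/idP/idP => [DE | sub]; last exact (val_trans Hval (val_determined D) (val_refl Hval sub)).
apply/subsetP => x xE; rewrite inE; apply: (val_trans Hval DE).
by apply: (val_refl Hval); rewrite sub1set.
Qed.

Lemma sub_determined D : D \subset determined D.
Proof. by rewrite -val_determinedE; apply: (val_refl Hval). Qed.

(* Contiguity for the cut (~: reach, reach), whose borders lie in [determined D]. *)
Lemma region_not_val D b x :
  x \in region e (determined D) b -> ~~ val (~: region e (determined D) b) [set x].
Proof.
set X := determined D; set W := reach e X b.
rewrite in_setD => /andP[xX xW]; apply/negP.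
rewrite setCD => /(val_contig Hval (subxx (~: W))).
rewrite setCK sub1set => /(_ xW); rewrite [border e (~: W) :|: _]setUC.
rewrite (setUidPr (border_reach e_sym X b)) => Xx.
by move: xX; rewrite inE (val_trans Hval (val_determined D) Xx).
Qed.

Definition separator D E : {set T} :=
  if [pick b in E :\: determined D] is Some b then region e (determined D) b else set0.

Lemma separator_linked D E : linked e (separator D E).
Proof.
rewrite /separator; case: pickP => [b | _]; last by move=> f _ y; rewrite inE.
by rewrite in_setD => /andP[bX _]; apply: linked_region.
Qed.

Lemma separator_not_val D E x :
  x \in separator D E -> ~~ val (~: separator D E) [set x].
Proof.
by rewrite /separator; case: pickP => [b _ | _]; [apply: region_not_val | rewrite inE].
Qed.

Lemma separator_disjoint D E : D \subset ~: separator D E.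
Proof.
apply/subsetP => d dD; rewrite inE /separator; case: pickP => [b _ | _]; last by rewrite inE.
by rewrite in_setD (subsetP (sub_determined D)).
Qed.

Lemma separator_meets D E : ~~ val D E -> exists2 b, b \in E & b \in separator D E.
Proof.
rewrite val_determinedE /separator => not_sub; case: pickP => [b | none].
  by rewrite in_setD => /andP[bX bE]; exists b; rewrite // in_setD bX inE connect0.
case/negP: not_sub; apply/subsetP => x xE; apply: contraFT (none x) => xX.
by rewrite in_setD xX.
Qed.

End Separators.

Section ModelGame.
Variables (T : finType) (e : rel T) (val : {set T} -> {set T} -> bool).
Hypotheses (e_sym : forall x y, e x y = e y x) (e_irr : forall x, e x x = false).
Hypothesis Hval : gmodel e val.

Local Notation sep q := (separator e val q.1 q.2).
Local Notation strategy := {ffun {set T} * {set T} -> cell}.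

Definition model_ok v (s : T -> strategy) :=
  [forall q, cell_ok e (sep q) v (fun w => s w q)].

Definition model_game : game T := constraint_game model_ok.

Lemma model_game_over : game_over e model_game.
Proof.
apply: constraint_game_over => v s t st; apply: eq_forallb => q.
by apply: cell_ok_local => w /st->.
Qed.

Lemma model_game_NE (s : T -> strategy) :
  is_NE (G := model_game) s <-> forall q, exists c, (fun w => s w q) =1 flag (sep q) c.
Proof.
have fixable v (s' : T -> strategy) : exists x, model_ok v (update s' v x).
  have [x ok_x] := fin_all_exists (fun q => cell_ok_fixable (sep q) e_irr v (fun w => s' w q)).
  exists [ffun q => x q]; apply/forallP => q.
  rewrite (cell_ok_local _ (m := update (fun w => s' w q) v (x q))) ?ok_x // => w _.
  by rewrite /update; case: eqP => // _; apply: ffunE.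
rewrite (constraint_game_NE fixable); split=> [ok_s q | flags v].
  apply: (ok_flag e_sym) => [v | ]; first exact: (forallP (ok_s v) q).
  exact: separator_linked.
apply/forallP => q; have [c sq] := flags q.
by rewrite (cell_ok_local _ (m := flag (sep q) c)) ?flag_ok // => w _; apply: sq.
Qed.

Lemma sat_rhd D E : sat model_game (FRhd D E) <-> val D E.
Proof.
split=> [sat_DE | DE s t NEs NEt st x xE]; last first.
  apply/ffunP => q; set Y := sep q.
  have [c1 sq] := (model_game_NE s).1 NEs q; have [c2 tq] := (model_game_NE t).1 NEt q.
  rewrite (sq x) (tq x) /flag; case xY: (x \in Y) => //=.
  case: (eqVneq c1 c2) => [-> // | c12]; exfalso.
  have DY : D \subset ~: Y.
    apply/subsetP => d dD; rewrite inE; apply: contra c12 => dY.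
    have : s d q = t d q by rewrite (st d dD).
    by rewrite (sq d) (tq d) /flag dY => -[->].
  have Yx : val (~: Y) [set x].
    apply: (val_trans Hval (val_trans Hval (val_refl Hval DY) DE)).
    by apply: (val_refl Hval); rewrite sub1set.
  by move: (separator_not_val e_sym Hval xY); rewrite Yx.
apply: contraTT isT => not_DE.
have [b bE bY] := separator_meets Hval not_DE.
pose s w : strategy := [ffun q => flag (sep q) (q == (D, E)) w].
pose t w : strategy := [ffun q => flag (sep q) false w].
have NEs : is_NE (G := model_game) s.
  by apply/model_game_NE => q; exists (q == (D, E)) => w; rewrite ffunE.
have NEt : is_NE (G := model_game) t.
  by apply/model_game_NE => q; exists false => w; rewrite ffunE.
have st : eq_on (G := model_game) D s t.
  move=> d dD; apply/ffunP => q; rewrite !ffunE /flag; case: eqP => [-> | _] //=.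
  by move: (subsetP (separator_disjoint Hval D E) d dD); rewrite inE => /negbTE->.
have : s b (D, E) = t b (D, E) by rewrite (sat_DE s t NEs NEt st b bE).
by rewrite !ffunE /flag /= bY eqxx.
Qed.

Lemma sat_feval phi : sat model_game phi <-> feval val phi.
Proof.
elim: phi => [| D E | p IHp q IHq] /=; [by [] | exact: sat_rhd |].
split=> [pq | /implyP pq /IHp/pq/IHq //].
by apply/implyP => /IHp/pq/IHq.
Qed.

End ModelGame.

Theorem theorem1 (T : finType) (e : rel T) (e_sym : forall x y : T, e x y = e y x)
  (e_irr : forall x : T, e x x = false) (phi : form T) :
  ~ gderivable e phi ->
  exists G : game T, game_over e G /\ ~ sat G phi.
Proof.
move=> not_phi; have [val Hval phi_false] := not_derivable_countermodel not_phi.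
exists (model_game e val); split; first exact: model_game_over.
by rewrite (sat_feval e_sym e_irr Hval); apply/negP.
Qed.
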